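(* Let $(S(t),I(t))$ be a solution of the impulsive system $\dot S=S(A-S)-\beta_0 IS$, $\dot I=\beta_0 IS-(\sigma+g)I$ for $t\neq nT$, $S(nT)=(1-p)S(nT^-)$, $I(nT)=I(nT^-)$, with positive initial conditions in $$\mathcal{M}=\left\{(S,I)\in(\mathbb{R}_0^+)^2:\ 0\le S\le A,\ 0\le S+I\le\tfrac{A(\sigma+g+A)}{\sigma+g}\right\}.$$ If $\mathcal{R}_p<1$, then $\lim_{t\to+\infty}I(t)=0$.
   Context: Parameters: $A\in(0,1]$, $\beta_0>0$, $\sigma,g\ge0$ with $\sigma+g>0$, $p\in[0,1)$, $T>0$; it is assumed $S(t)\le A$. $\mathcal{R}_p=\frac{\beta_0}{\sigma+g}\frac1T\int_0^T\mathcal{S}(t)\,dt$, where $\mathcal{S}(t)=\frac{A[e^{AT}(1-p)-1]}{e^{AT}(1-p)-1+pe^{A(T-t)}}$ for $0\le t<T$; equivalently $\mathcal{R}_p=\frac{A\beta_0}{\sigma+g}\left[\frac{\ln(1-p)}{AT}+1\right]$. *)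

From Stdlib Require Import Reals.
From Coquelicot Require Import Coquelicot.
Open Scope R_scope.

(* The periodic susceptible profile S(t), 0 <= t < T, from the paper. *)
Definition Sper (A p T t : R) : R :=
  A * (exp (A * T) * (1 - p) - 1) /
  (exp (A * T) * (1 - p) - 1 + p * exp (A * (T - t))).

Definition Rp (A beta0 sigma g p T : R) : R :=
  beta0 / (sigma + g) * (/ T * RInt (Sper A p T) 0 T).

Definition impulse_time (T t : R) : Prop := exists n : nat, t = INR n * T.

Definition impulsive_solution (A beta0 sigma g p T : R) (S I : R -> R) : Prop :=
  (forall t, 0 < t -> ~ impulse_time T t ->
      is_derive S t (S t * (A - S t) - beta0 * I t * S t) /\
      is_derive I t (beta0 * I t * S t - (sigma + g) * I t)) /\
  (forall n : nat,
      filterlim S (at_right (INR n * T)) (locally (S (INR n * T))) /\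
      filterlim I (at_right (INR n * T)) (locally (I (INR n * T)))) /\
  (forall n : nat, (1 <= n)%nat ->
      (exists L : R, filterlim S (at_left (INR n * T)) (locally L) /\
                     S (INR n * T) = (1 - p) * L) /\
      filterlim I (at_left (INR n * T)) (locally (I (INR n * T)))).

(* Between impulses [w = 1 / S] satisfies [w' = 1 - (A - beta0 I) w >= 1 - r w] for every
   [r >= A], and each impulse multiplies [w] by [1 / (1 - p)]. Compared with the solution
   [inv_logistic r c] of [w' = 1 - r w] that is periodic under these impulses, any excess of
   [inv_logistic r c] over [w] decays geometrically from period to period, so eventually
   [S <= M / inv_logistic r c] for a given [M > 1]. On each later period
   [I' <= I (beta0 M / inv_logistic r c - (sigma + g))], and [1 / inv_logistic r c] integrates
   to [r T + ln (1 - p)] over a period, so [I^2] shrinks at least by the factor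
   [exp (2 (beta0 M (r T + ln (1 - p)) - (sigma + g) T))]. The condition [Rp < 1] reads
   [beta0 (A T + ln (1 - p)) < (sigma + g) T], which leaves room to choose [r >= A] and [M > 1]
   making this factor smaller than 1. *)

From Stdlib Require Import Reals Lra Lia Psatz Ranalysis5.
From Coquelicot Require Import Coquelicot.
Open Scope R_scope.

Lemma exp_le_compat x y : x <= y -> exp x <= exp y.
Proof.
  intros Hxy; destruct (Rle_lt_or_eq_dec x y Hxy) as [H | ->]; [left | right];
    [apply exp_increasing | ]; auto.
Qed.

Lemma exp_weighted_le x y u v : x * exp (- u) <= y * exp (- v) -> x <= y * exp (u - v).
Proof.
  intros H. pose proof (exp_pos (- u)) as Hu.
  assert (E : exp (u - v) * exp (- u) = exp (- v)) by (rewrite <- exp_plus; f_equal; ring).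
  apply (Rmult_le_reg_r (exp (- u))); [exact Hu |]. now rewrite Rmult_assoc, E.
Qed.

Lemma exp_weighted_ge x y u v : y * exp (- v) <= x * exp (- u) -> y * exp (u - v) <= x.
Proof.
  intros H. pose proof (exp_pos (- u)) as Hu.
  assert (E : exp (u - v) * exp (- u) = exp (- v)) by (rewrite <- exp_plus; f_equal; ring).
  apply (Rmult_le_reg_r (exp (- u))); [exact Hu |]. now rewrite Rmult_assoc, E.
Qed.

Lemma at_right_Ioo a t (P : R -> Prop) : a < t -> (forall u, a < u < t -> P u) -> at_right a P.
Proof.
  intros Hat HP. apply (locally_interval _ a m_infty t); simpl; [easy | exact Hat |].
  intros u _ Hut Hau. now apply HP.
Qed.

Lemma at_left_Ioo s b (P : R -> Prop) : s < b -> (forall u, s < u < b -> P u) -> at_left b P.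
Proof.
  intros Hsb HP. apply (locally_interval _ b s p_infty); simpl; [exact Hsb | easy |].
  intros u Hsu _ Hub. now apply HP.
Qed.

Lemma filterlim_mult_R {F : (R -> Prop) -> Prop} {FF : Filter F} (f g : R -> R) x y :
  filterlim f F (locally x) -> filterlim g F (locally y) ->
  filterlim (fun t => f t * g t) F (locally (x * y)).
Proof.
  intros Hf Hg. eapply filterlim_comp_2; [exact Hf | exact Hg | exact (filterlim_mult x y)].
Qed.

Lemma filterlim_plus_R {F : (R -> Prop) -> Prop} {FF : Filter F} (f g : R -> R) x y :
  filterlim f F (locally x) -> filterlim g F (locally y) ->
  filterlim (fun t => f t + g t) F (locally (x + y)).
Proof.
  intros Hf Hg. eapply filterlim_comp_2; [exact Hf | exact Hg | exact (filterlim_plus x y)].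
Qed.

Lemma filterlim_within_continuous (h : R -> R) (D : R -> Prop) x :
  continuous h x -> filterlim h (within D (locally x)) (locally (h x)).
Proof. exact (filterlim_filter_le_1 h (filter_le_within D)). Qed.

Lemma continuous_of_is_derive (f : R -> R) x l : is_derive f x l -> continuous f x.
Proof. intros H. apply (ex_derive_continuous (V := R_NormedModule)). now exists l. Qed.

Lemma nondecreasing_of_is_derive_ge0 (f df : R -> R) a b :
  (forall t, a < t < b -> is_derive f t (df t)) ->
  (forall t, a < t < b -> 0 <= df t) ->
  filterlim f (at_right a) (locally (f a)) ->
  (forall s t, a <= s -> s <= t -> t < b -> f s <= f t) /\
  (forall L, filterlim f (at_left b) (locally L) -> forall s, a <= s < b -> f s <= L).
Proof.
  intros Hd Hdf Hr.
  assert (Hint : forall s t, a < s -> s <= t -> t < b -> f s <= f t).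
  { intros s t Has Hst Htb.
    destruct (MVT_gen f s t df) as [c [Hc Hmvt]];
      rewrite ?Rmin_left, ?Rmax_right in * by lra.
    - intros x Hx. apply Hd. lra.
    - intros x Hx. apply continuity_pt_filterlim, (continuous_of_is_derive f x (df x)), Hd. lra.
    - assert (0 <= df c) by (apply Hdf; lra). nra. }
  assert (Hmono : forall s t, a <= s -> s <= t -> t < b -> f s <= f t).
  { intros s t Has Hst Htb.
    destruct (Rle_lt_or_eq_dec a s Has) as [Has' | <-]; [now apply Hint |].
    destruct (Rle_lt_or_eq_dec a t Hst) as [Hat | <-]; [| lra].
    apply (closed_filterlim_loc f (fun y => y <= f t) (f a) Hr); [| apply closed_le].
    apply (at_right_Ioo a t); [exact Hat |]. intros u Hu. apply Hint; lra. }
  split; [exact Hmono |]. intros L Hl s Hs.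
  apply (closed_filterlim_loc f (fun y => f s <= y) L Hl); [| apply closed_ge].
  apply (at_left_Ioo s b); [lra |]. intros u Hu. apply Hmono; lra.
Qed.

Lemma nonincreasing_of_is_derive_le0 (f df : R -> R) a b :
  (forall t, a < t < b -> is_derive f t (df t)) ->
  (forall t, a < t < b -> df t <= 0) ->
  filterlim f (at_right a) (locally (f a)) ->
  (forall s t, a <= s -> s <= t -> t < b -> f t <= f s) /\
  (forall L, filterlim f (at_left b) (locally L) -> forall s, a <= s < b -> L <= f s).
Proof.
  intros Hd Hdf Hr.
  assert (Hopp : forall F l,
    filterlim f F (locally l) -> filterlim (fun t => - f t) F (locally (- l))).
  { intros F l Hl. exact (filterlim_comp _ _ _ f Ropp F _ _ Hl (filterlim_opp l)). }
  destruct (nondecreasing_of_is_derive_ge0 (fun t => - f t) (fun t => - df t) a b) as [Hmono Hlim].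
  - intros t Ht. exact (is_derive_opp f t (df t) (Hd t Ht)).
  - intros t Ht. specialize (Hdf t Ht). lra.
  - now apply Hopp.
  - split.
    + intros s t Has Hst Htb. specialize (Hmono s t Has Hst Htb). lra.
    + intros L Hl s Hs. specialize (Hlim (- L) (Hopp _ _ Hl) s Hs). lra.
Qed.

Lemma pos_on_Ico_of_nonzero (f : R -> R) a b :
  (forall t, a < t < b -> continuous f t) ->
  filterlim f (at_right a) (locally (f a)) -> 0 < f a ->
  (forall t, a <= t < b -> f t <> 0) -> forall t, a <= t < b -> 0 < f t.
Proof.
  intros Hc Hr Ha Hnz t Ht.
  destruct (Rle_lt_or_eq_dec a t (proj1 Ht)) as [Hat | <-]; [| exact Ha].
  destruct (Rlt_or_le 0 (f t)) as [Hpos | Hneg]; [exact Hpos | exfalso].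
  assert (Hft : f t < 0) by (destruct Hneg as [H | H]; [exact H | now destruct (Hnz t Ht)]).
  assert (Hnear : at_right a (fun u => 0 < f u /\ a < u < t)).
  { apply filter_and; [apply Hr, open_gt, Ha | apply (at_right_Ioo a t); auto]. }
  destruct (filter_ex _ Hnear) as [u [Hfu Hu]].
  destruct (IVT_interv (fun x => - f x) u t) as [z [Hz Hfz]]; try lra.
  - intros x Hx. apply continuity_pt_opp, continuity_pt_filterlim, Hc. lra.
  - apply (Hnz z); lra.
Qed.

Section SquareBounds.

Variables (f h G g : R -> R) (a b : R).
Hypothesis hab : a < b.
Hypothesis f_derive : forall t, a < t < b -> is_derive f t (f t * h t).
Hypothesis G_derive : forall t, is_derive G t (g t).
Hypothesis f_right : filterlim f (at_right a) (locally (f a)).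

(* Squaring makes [Z] monotone whatever the sign of [f], which is not yet known when
   positivity is being proved. *)
Let Z t := f t ^ 2 * exp (- (2 * G t)).

Let Z_derive t : a < t < b -> is_derive Z t (2 * Z t * (h t - g t)).
Proof.
  intros Ht. pose proof (f_derive t Ht) as Hf. pose proof (G_derive t) as HG.
  unfold Z. auto_derive.
  - repeat split; eexists; eassumption.
  - change (fun x : R => f x) with f. change (fun x : R => G x) with G.
    rewrite (is_derive_unique _ _ _ Hf), (is_derive_unique _ _ _ HG). ring.
Qed.

Let Z_lim (D : R -> Prop) x l : filterlim f (within D (locally x)) (locally l) ->
  filterlim Z (within D (locally x)) (locally (l ^ 2 * exp (- (2 * G x)))).
Proof.
  intros Hl. apply filterlim_mult_R.
  - apply (filterlim_comp _ _ _ f (fun y => y ^ 2) _ (locally l)); [exact Hl |].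
    apply (continuous_of_is_derive (fun y => y ^ 2) l (2 * l)). auto_derive; [easy | ring].
  - apply (filterlim_within_continuous (fun t => exp (- (2 * G t)))).
    apply (continuous_of_is_derive _ _ (- (2 * g x) * exp (- (2 * G x)))).
    apply (is_derive_comp exp (fun t => - (2 * G t))); [apply is_derive_exp |].
    apply (is_derive_opp (fun t => 2 * G t)), (is_derive_scal G), G_derive.
Qed.

Lemma sq_le_of_rate_le : (forall t, a < t < b -> h t <= g t) ->
  (forall t, a <= t < b -> f t ^ 2 <= f a ^ 2 * exp (2 * G t - 2 * G a)) /\
  (forall L, filterlim f (at_left b) (locally L) ->
     L ^ 2 <= f a ^ 2 * exp (2 * G b - 2 * G a)).
Proof.
  intros Hhg.
  assert (Hsign : forall t, a < t < b -> 2 * Z t * (h t - g t) <= 0).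
  { intros t Ht. specialize (Hhg t Ht). unfold Z.
    pose proof (exp_pos (- (2 * G t))). pose proof (pow2_ge_0 (f t)).
    assert (0 <= 2 * (f t ^ 2 * exp (- (2 * G t)))) by nra. nra. }
  destruct (nonincreasing_of_is_derive_le0 Z _ a b Z_derive Hsign (Z_lim _ a (f a) f_right))
    as [Hmono Hlim].
  split.
  - intros t Ht. apply exp_weighted_le. apply (Hmono a t); lra.
  - intros L HL. apply exp_weighted_le. apply (Hlim _ (Z_lim _ b L HL) a). lra.
Qed.

Lemma sq_ge_of_rate_ge : (forall t, a < t < b -> g t <= h t) ->
  (forall t, a <= t < b -> f a ^ 2 * exp (2 * G t - 2 * G a) <= f t ^ 2) /\
  (forall L, filterlim f (at_left b) (locally L) ->
     f a ^ 2 * exp (2 * G b - 2 * G a) <= L ^ 2).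
Proof.
  intros Hhg.
  assert (Hsign : forall t, a < t < b -> 0 <= 2 * Z t * (h t - g t)).
  { intros t Ht. specialize (Hhg t Ht). unfold Z.
    pose proof (exp_pos (- (2 * G t))). pose proof (pow2_ge_0 (f t)).
    assert (0 <= 2 * (f t ^ 2 * exp (- (2 * G t)))) by nra. nra. }
  destruct (nondecreasing_of_is_derive_ge0 Z _ a b Z_derive Hsign (Z_lim _ a (f a) f_right))
    as [Hmono Hlim].
  split.
  - intros t Ht. apply exp_weighted_ge. apply (Hmono a t); lra.
  - intros L HL. apply exp_weighted_ge. apply (Hlim _ (Z_lim _ b L HL) a). lra.
Qed.

End SquareBounds.

Lemma pos_of_rate_ge (f h : R -> R) a b M : a < b ->
  (forall t, a < t < b -> is_derive f t (f t * h t)) ->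
  (forall t, a < t < b -> - M <= h t) ->
  filterlim f (at_right a) (locally (f a)) -> 0 < f a ->
  (forall t, a <= t < b -> 0 < f t) /\
  (forall L, filterlim f (at_left b) (locally L) -> 0 < L).
Proof.
  intros Hab Hd Hh Hr Ha.
  assert (HG : forall t, is_derive (fun s => - M * s) t (- M)).
  { intros t. auto_derive; [easy | ring]. }
  destruct (sq_ge_of_rate_ge f h _ _ a b Hab Hd HG Hr Hh) as [Hin Hlim].
  assert (Hpos : forall t, a <= t < b -> 0 < f t).
  { apply pos_on_Ico_of_nonzero; [| exact Hr | exact Ha |].
    - intros t Ht. exact (continuous_of_is_derive f t _ (Hd t Ht)).
    - intros t Ht Hz. specialize (Hin t Ht). rewrite Hz in Hin.
      pose proof (exp_pos (2 * (- M * t) - 2 * (- M * a))).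
      pose proof (pow_lt (f a) 2 Ha). nra. }
  split; [exact Hpos |]. intros L HL.
  assert (HL0 : 0 <= L).
  { apply (closed_filterlim_loc f (fun y => 0 <= y) L HL); [| apply closed_ge].
    apply (at_left_Ioo a b); [exact Hab |]. intros u Hu. left. apply Hpos. lra. }
  specialize (Hlim L HL). pose proof (exp_pos (2 * (- M * b) - 2 * (- M * a))).
  pose proof (pow_lt (f a) 2 Ha).
  destruct HL0 as [HL0 | <-]; [exact HL0 | nra].
Qed.

(* [1 / inv_logistic r c] solves the logistic equation [u' = u (r - u)]. *)
Definition inv_logistic (r c t : R) : R := / r + c * exp (- r * t).

Lemma inv_logistic_ge r c t : 0 < r -> 0 <= c -> / r <= inv_logistic r c t.
Proof. intros Hr Hc. unfold inv_logistic. pose proof (exp_pos (- r * t)). nra. Qed.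

Lemma inv_logistic_pos r c t : 0 < r -> 0 <= c -> 0 < inv_logistic r c t.
Proof.
  intros Hr Hc. pose proof (inv_logistic_ge r c t Hr Hc). pose proof (Rinv_0_lt_compat r Hr). lra.
Qed.

(* The [c] for which [1 / inv_logistic r c] is [T]-periodic under the impulse
   [u (nT) = (1 - p) u (nT^-)]; for [r = A] this is the profile [Sper A p T]. *)
Definition impulse_const (r p T : R) : R :=
  p * exp (r * T) / (r * (exp (r * T) * (1 - p) - 1)).

Lemma impulse_const_spec r p T : 0 < r -> 0 <= p < 1 -> 1 < exp (r * T) * (1 - p) ->
  0 <= impulse_const r p T /\
  inv_logistic r (impulse_const r p T) T = (1 - p) * inv_logistic r (impulse_const r p T) 0.
Proof.
  intros Hr Hp HE. pose proof (exp_pos (r * T)). unfold impulse_const, inv_logistic.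
  split.
  - apply Rmult_le_pos; [nra | apply Rlt_le, Rinv_0_lt_compat; nra].
  - replace (- r * T) with (- (r * T)) by ring. rewrite Rmult_0_r, exp_0, exp_Ropp.
    field. repeat split; nra.
Qed.

Lemma RInt_Sper A p T : 0 < A -> 0 <= p < 1 -> 0 < T ->
  RInt (Sper A p T) 0 T = A * T + ln (1 - p).
Proof.
  intros HA Hp HT.
  set (E := exp (A * T)).
  assert (HE : 1 < E) by (unfold E; rewrite <- exp_0; apply exp_increasing; nra).
  set (den t := E * (1 - p) - 1 + p * exp (A * (T - t))).
  assert (Hden : forall t, t <= T -> 0 < den t).
  { intros t Ht. unfold den.
    assert (1 <= exp (A * (T - t))) by (rewrite <- exp_0; apply exp_le_compat; nra). nra. }
  assert (Hprim : forall t, t <= T ->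
    is_derive (fun s => A * s + ln (den s)) t (Sper A p T t)).
  { intros t Ht. pose proof (Hden t Ht) as Hd. unfold den, Sper, E in *.
    auto_derive; [exact Hd |]. unfold Rminus. field. unfold Rminus in Hd. lra. }
  assert (HI : is_RInt (Sper A p T) 0 T (minus (A * T + ln (den T)) (A * 0 + ln (den 0)))).
  { apply (is_RInt_derive (fun s => A * s + ln (den s))); rewrite Rmin_left, Rmax_right by lra.
    - intros t Ht. apply Hprim. lra.
    - intros t Ht. apply (ex_derive_continuous (V := R_NormedModule)).
      pose proof (Hden t (proj2 Ht)) as Hd. unfold den, Sper, E, Rminus in *. auto_derive. lra. }
  rewrite (is_RInt_unique _ _ _ _ HI). unfold minus, plus, opp, den; simpl.
  replace (T - T) with 0 by ring. replace (T - 0) with T by ring. rewrite Rmult_0_r, exp_0.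
  fold E. replace (E * (1 - p) - 1 + p * 1) with ((1 - p) * (E - 1)) by ring.
  replace (E * (1 - p) - 1 + p * E) with (E - 1) by ring.
  rewrite ln_mult by lra. ring.
Qed.

Lemma Rp_lt_1_iff A beta0 sigma g p T : 0 < A -> 0 < sigma + g -> 0 <= p < 1 -> 0 < T ->
  Rp A beta0 sigma g p T < 1 <-> beta0 * (A * T + ln (1 - p)) < (sigma + g) * T.
Proof.
  intros HA Hk Hp HT. unfold Rp. rewrite RInt_Sper by assumption.
  replace (beta0 / (sigma + g) * (/ T * (A * T + ln (1 - p))))
    with (beta0 * (A * T + ln (1 - p)) / ((sigma + g) * T)) by (field; lra).
  assert (HkT : 0 < (sigma + g) * T) by nra.
  split; intros H.
  - apply (Rmult_lt_compat_r ((sigma + g) * T)) in H; [| exact HkT].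
    unfold Rdiv in H. rewrite Rmult_assoc, Rinv_l, Rmult_1_r in H by lra. lra.
  - apply (Rmult_lt_reg_r ((sigma + g) * T)); [exact HkT |].
    unfold Rdiv. rewrite Rmult_assoc, Rinv_l, Rmult_1_r by lra. lra.
Qed.

Section Period.

Variables (A beta k : R) (S I : R -> R) (a b : R).
Hypotheses (hA : 0 < A) (hbeta : 0 < beta) (hk : 0 <= k) (hab : a < b).
Hypothesis S_derive :
  forall t, a < t < b -> is_derive S t (S t * (A - S t) - beta * I t * S t).
Hypothesis I_derive :
  forall t, a < t < b -> is_derive I t (beta * I t * S t - k * I t).
Hypothesis S_right : filterlim S (at_right a) (locally (S a)).
Hypothesis I_right : filterlim I (at_right a) (locally (I a)).
Hypothesis S_le : forall t, a <= t < b -> S t <= A.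

Let S_rate t : a < t < b -> is_derive S t (S t * (A - S t - beta * I t)).
Proof.
  intros Ht. replace (S t * (A - S t - beta * I t)) with (S t * (A - S t) - beta * I t * S t)
    by ring. now apply S_derive.
Qed.

Let I_rate t : a < t < b -> is_derive I t (I t * (beta * S t - k)).
Proof.
  intros Ht. replace (I t * (beta * S t - k)) with (beta * I t * S t - k * I t) by ring.
  now apply I_derive.
Qed.

Lemma I_sq_le_growth :
  forall t, a <= t < b -> I t ^ 2 <= I a ^ 2 * exp (2 * beta * A * (b - a)).
Proof.
  assert (HG : forall t, is_derive (fun s => beta * A * s) t (beta * A)).
  { intros t. auto_derive; [easy | ring]. }
  destruct (sq_le_of_rate_le I _ _ _ a b hab I_rate HG I_right) as [Hin _].
  { intros t Ht. cbv beta. pose proof (S_le t ltac:(lra)). nra. }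
  intros t Ht. eapply Rle_trans; [exact (Hin t Ht) |].
  apply Rmult_le_compat_l; [apply pow2_ge_0 |]. apply exp_le_compat.
  assert (0 < beta * A) by nra. nra.
Qed.

Lemma period_pos : 0 < S a -> 0 < I a ->
  (forall t, a <= t < b -> 0 < S t /\ 0 < I t) /\
  (forall L, filterlim S (at_left b) (locally L) -> 0 < L) /\
  (forall L, filterlim I (at_left b) (locally L) -> 0 < L).
Proof.
  intros HSa HIa.
  set (B := I a ^ 2 * exp (2 * beta * A * (b - a))).
  destruct (pos_of_rate_ge S _ a b (beta * (1 + B)) hab S_rate) as [HS HSlim];
    [| exact S_right | exact HSa |].
  { intros t Ht. cbv beta. pose proof (S_le t ltac:(lra)).
    pose proof (I_sq_le_growth t ltac:(lra)) as HIt. fold B in HIt.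
    pose proof (pow2_ge_0 (I t - 1)).
    assert (I t <= 1 + B) by nra. nra. }
  destruct (pos_of_rate_ge I _ a b k hab I_rate) as [HI HIlim];
    [| exact I_right | exact HIa |].
  { intros t Ht. cbv beta. specialize (HS t ltac:(lra)). nra. }
  repeat split; auto.
Qed.

Lemma inv_S_gap_growth r c : A <= r -> 0 < S a -> 0 < I a ->
  (forall t, a <= t < b -> / S a - inv_logistic r c 0 <=
     (/ S t - inv_logistic r c (t - a)) * exp (r * (t - a))) /\
  (forall L, filterlim S (at_left b) (locally L) -> / S a - inv_logistic r c 0 <=
     (/ L - inv_logistic r c (b - a)) * exp (r * (b - a))).
Proof.
  intros HAr HSa HIa.
  destruct (period_pos HSa HIa) as [Hpos [HSlim _]].
  set (D t := (/ S t - inv_logistic r c (t - a)) * exp (r * (t - a))).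
  assert (HD : forall t, a < t < b ->
    is_derive D t (exp (r * (t - a)) * ((r - A + beta * I t) / S t))).
  { intros t Ht. destruct (Hpos t ltac:(lra)) as [HSt HIt].
    pose proof (S_rate t Ht) as HSd. unfold D, inv_logistic. auto_derive.
    - repeat split; [eexists; eassumption | lra].
    - change (fun x : R => S x) with S. rewrite (is_derive_unique _ _ _ HSd).
      replace (- r * (t + - a)) with (- (r * (t + - a))) by ring. rewrite exp_Ropp.
      pose proof (exp_pos (r * (t + - a))). unfold Rminus. field. lra. }
  assert (Hlim : forall (Dm : R -> Prop) x l, filterlim S (within Dm (locally x)) (locally l) ->
    l <> 0 -> filterlim D (within Dm (locally x))
                 (locally ((/ l - inv_logistic r c (x - a)) * exp (r * (x - a))))).
  { intros Dm x l Hl Hl0. apply filterlim_mult_R.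
    - apply filterlim_plus_R.
      + apply (filterlim_comp _ _ _ S Rinv _ (locally l)); [exact Hl |].
        exact (continuous_Rinv l Hl0).
      + apply (filterlim_within_continuous (fun t => - inv_logistic r c (t - a))).
        apply (ex_derive_continuous (V := R_NormedModule)). unfold inv_logistic. now auto_derive.
    - apply (filterlim_within_continuous (fun t => exp (r * (t - a)))).
      apply (ex_derive_continuous (V := R_NormedModule)). now auto_derive. }
  assert (Hsign : forall t, a < t < b -> 0 <= exp (r * (t - a)) * ((r - A + beta * I t) / S t)).
  { intros t Ht. destruct (Hpos t ltac:(lra)) as [HSt HIt].
    apply Rmult_le_pos; [apply Rlt_le, exp_pos |]. apply Rdiv_le_0_compat; nra. }
  destruct (nondecreasing_of_is_derive_ge0 D _ a b HD Hsign (Hlim _ a (S a) S_right ltac:(lra)))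
    as [Hmono Hleft].
  assert (HDa : D a = / S a - inv_logistic r c 0).
  { unfold D. replace (a - a) with 0 by ring. rewrite Rmult_0_r, exp_0. ring. }
  rewrite <- HDa. split.
  - intros t Ht. apply (Hmono a t); lra.
  - intros L HL. apply (Hleft _ (Hlim _ b L HL (Rgt_not_eq _ _ (HSlim L HL))) a). lra.
Qed.

Lemma I_sq_period_decay r c M : 0 < r -> 0 <= c ->
  (forall t, a < t < b -> S t <= M / inv_logistic r c (t - a)) ->
  filterlim I (at_left b) (locally (I b)) ->
  I b ^ 2 <= I a ^ 2 * exp (2 * (beta * M * (r * (b - a) + ln (inv_logistic r c (b - a))
                                  - ln (inv_logistic r c 0)) - k * (b - a))).
Proof.
  intros Hr Hc HS HIb.
  (* [s |-> r s + ln (inv_logistic r c s)] is a primitive of [1 / inv_logistic r c]. *)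
  set (G t := beta * M * (r * (t - a) + ln (inv_logistic r c (t - a))) - k * t).
  assert (HG : forall t, is_derive G t (beta * M / inv_logistic r c (t - a) - k)).
  { intros t. pose proof (inv_logistic_pos r c (t - a) Hr Hc) as Hw.
    unfold G, inv_logistic, Rminus in *. auto_derive; [exact Hw |].
    replace (- r * (t + - a)) with (- (r * (t + - a))) in * by ring. rewrite exp_Ropp in *.
    pose proof (exp_pos (r * (t + - a))).
    assert (0 <= c * r) by nra. field. repeat split; lra. }
  destruct (sq_le_of_rate_le I _ G _ a b hab I_rate HG I_right) as [_ Hleft].
  { intros t Ht. cbv beta. pose proof (HS t Ht). nra. }
  replace (2 * (beta * M * (r * (b - a) + ln (inv_logistic r c (b - a))
                 - ln (inv_logistic r c 0)) - k * (b - a))) with (2 * G b - 2 * G a).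
  - exact (Hleft (I b) HIb).
  - unfold G. replace (a - a) with 0 by ring. ring.
Qed.

End Period.



Lemma exists_comparison_rate A beta k p T : 0 < A -> 0 < beta -> 0 < k -> 0 <= p < 1 -> 0 < T ->
  beta * (A * T + ln (1 - p)) < k * T ->
  exists r M, A <= r /\ 0 < r * T + ln (1 - p) /\ 1 < M /\
              beta * M * (r * T + ln (1 - p)) < k * T.
Proof.
  intros HA Hb Hk Hp HT Hgap.
  set (L0 := A * T + ln (1 - p)) in Hgap.
  set (q := k * T / beta).
  assert (Hq : beta * q = k * T) by (unfold q; field; lra).
  assert (Hq0 : 0 < q) by (unfold q; apply Rdiv_lt_0_compat; nra).
  assert (Hmax : Rmax L0 0 < q) by (apply Rmax_lub_lt; nra).
  set (L := (q + Rmax L0 0) / 2).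
  assert (HL : L0 <= L /\ 0 < L /\ beta * L < k * T).
  { pose proof (Rmax_l L0 0). pose proof (Rmax_r L0 0). unfold L.
    repeat split; [lra | lra | nra]. }
  destruct HL as [HL0 [HLpos HLk]].
  exists ((L - ln (1 - p)) / T), ((1 + k * T / (beta * L)) / 2).
  replace ((L - ln (1 - p)) / T * T + ln (1 - p)) with L by (field; lra).
  assert (HM : beta * L * (k * T / (beta * L)) = k * T) by (field; split; lra).
  assert (HM1 : 1 < k * T / (beta * L)).
  { apply (Rmult_lt_reg_l (beta * L)); nra. }
  repeat split; [| lra | lra | nra].
  apply (Rmult_le_reg_r T); [lra |]. unfold Rdiv. rewrite Rmult_assoc, Rinv_l by lra.
  unfold L0 in HL0. lra.
Qed.



Lemma is_lim_0_of_period_contraction (f : R -> R) T K kappa N0 :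
  0 < T -> 0 <= K -> 0 <= kappa < 1 ->
  (forall n, (N0 <= n)%nat -> f (INR n * T + T) ^ 2 <= kappa * f (INR n * T) ^ 2) ->
  (forall n t, INR n * T <= t < INR n * T + T -> f t ^ 2 <= K * f (INR n * T) ^ 2) ->
  is_lim f p_infty 0.
Proof.
  intros HT HK Hkappa Hstep Hin.
  set (C := K * f (INR N0 * T) ^ 2 + 1).
  assert (HC : 0 < C) by (unfold C; pose proof (pow2_ge_0 (f (INR N0 * T))); nra).
  assert (Htail : forall m, f (INR (N0 + m) * T) ^ 2 <= kappa ^ m * f (INR N0 * T) ^ 2).
  { induction m as [| m IH].
    - rewrite Nat.add_0_r. simpl. lra.
    - rewrite Nat.add_succ_r, S_INR, Rmult_plus_distr_r, Rmult_1_l.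
      eapply Rle_trans; [apply Hstep; lia |]. simpl. rewrite Rmult_assoc.
      apply Rmult_le_compat_l; [lra | exact IH]. }
  apply is_lim_spec. intros eps. simpl.
  destruct (pow_lt_1_zero kappa ltac:(rewrite Rabs_right; lra) (eps ^ 2 / C))
    as [N HN]; [apply Rdiv_lt_0_compat; [apply pow_lt, cond_pos | exact HC] |].
  exists (INR (N0 + N) * T). intros t Ht.
  assert (Ht0 : 0 <= t / T).
  { apply Rdiv_le_0_compat; [| exact HT]. pose proof (pos_INR (N0 + N)). nra. }
  destruct (nfloor_ex (t / T) Ht0) as [n Hn].
  assert (Hper : INR n * T <= t < INR n * T + T).
  { destruct Hn as [Hn1 Hn2]. replace t with (t / T * T) by (field; lra). split; nra. }
  assert (HnN : (N0 + N <= n)%nat).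
  { assert (Hlt : INR (N0 + N) < INR (n + 1)).
    { rewrite (plus_INR n 1). simpl. apply (Rmult_lt_reg_r T); lra. }
    apply INR_lt in Hlt. lia. }
  set (m := (n - N0)%nat).
  assert (Hnm : n = (N0 + m)%nat) by (unfold m; lia).
  specialize (HN m ltac:(unfold m; lia)).
  rewrite Rabs_right in HN by (apply Rle_ge, pow_le; lra).
  assert (Hft : f t ^ 2 <= C * kappa ^ m).
  { eapply Rle_trans; [exact (Hin n t Hper) |]. rewrite Hnm.
    pose proof (Htail m). pose proof (pow_le kappa m (proj1 Hkappa)).
    pose proof (pow2_ge_0 (f (INR N0 * T))). unfold C. nra. }
  assert (HCe : C * kappa ^ m < eps ^ 2).
  { apply (Rmult_lt_compat_l C) in HN; [| exact HC].
    replace (C * (eps ^ 2 / C)) with (eps ^ 2) in HN by (field; lra). exact HN. }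
  rewrite Rminus_0_r. pose proof (pow2_abs (f t)). pose proof (Rabs_pos (f t)).
  pose proof (cond_pos eps). nra.
Qed.

Lemma not_impulse_time_inside T n t : 0 < T -> INR n * T < t < INR n * T + T ->
  0 < t /\ ~ impulse_time T t.
Proof.
  intros HT Ht. split.
  - pose proof (pos_INR n). nra.
  - intros [m ->].
    assert (Hnm : INR n < INR m) by (apply (Rmult_lt_reg_r T); lra).
    assert (Hmn : INR m < INR (n + 1)) by (rewrite plus_INR; apply (Rmult_lt_reg_r T); simpl; lra).
    apply INR_lt in Hnm, Hmn. lia.
Qed.

Section Solution.

Variables (A beta0 sigma g p T : R) (S I : R -> R).
Hypotheses (hA : 0 < A) (hbeta0 : 0 < beta0) (hsg : 0 < sigma + g) (hp : 0 <= p < 1)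
  (hT : 0 < T).
Hypothesis hsol : impulsive_solution A beta0 sigma g p T S I.
Hypotheses (hS0 : 0 < S 0) (hI0 : 0 < I 0).
Hypothesis hSA : forall t, 0 <= t -> S t <= A.

Let hk : 0 <= sigma + g := Rlt_le _ _ hsg.

Let period_lt n : INR n * T < INR n * T + T.
Proof. lra. Qed.

Let next_INR n : INR (n + 1) * T = INR n * T + T.
Proof. rewrite plus_INR. simpl. ring. Qed.

Let sol_S_derive n : forall t, INR n * T < t < INR n * T + T ->
  is_derive S t (S t * (A - S t) - beta0 * I t * S t).
Proof.
  intros t Ht. destruct (not_impulse_time_inside T n t hT Ht) as [Ht0 Himp].
  exact (proj1 (proj1 hsol t Ht0 Himp)).
Qed.

Let sol_I_derive n : forall t, INR n * T < t < INR n * T + T ->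
  is_derive I t (beta0 * I t * S t - (sigma + g) * I t).
Proof.
  intros t Ht. destruct (not_impulse_time_inside T n t hT Ht) as [Ht0 Himp].
  exact (proj2 (proj1 hsol t Ht0 Himp)).
Qed.

Let sol_S_right n : filterlim S (at_right (INR n * T)) (locally (S (INR n * T))).
Proof. exact (proj1 (proj1 (proj2 hsol) n)). Qed.

Let sol_I_right n : filterlim I (at_right (INR n * T)) (locally (I (INR n * T))).
Proof. exact (proj2 (proj1 (proj2 hsol) n)). Qed.

Let sol_S_left n : exists L, filterlim S (at_left (INR n * T + T)) (locally L) /\
                             S (INR n * T + T) = (1 - p) * L.
Proof. rewrite <- next_INR. apply (proj2 (proj2 hsol) (n + 1)%nat). lia. Qed.

Let sol_I_left n : filterlim I (at_left (INR n * T + T)) (locally (I (INR n * T + T))).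
Proof. rewrite <- next_INR. apply (proj2 (proj2 hsol) (n + 1)%nat). lia. Qed.

Let sol_S_le n : forall t, INR n * T <= t < INR n * T + T -> S t <= A.
Proof. intros t Ht. apply hSA. pose proof (pos_INR n). nra. Qed.

#[local] Hint Resolve hk period_lt sol_S_derive sol_I_derive sol_S_right sol_I_right sol_S_le
  : core.

Lemma sol_pos_at n : 0 < S (INR n * T) /\ 0 < I (INR n * T).
Proof.
  induction n as [| n [HS HI]].
  - simpl. rewrite Rmult_0_l. auto.
  - rewrite S_INR, Rmult_plus_distr_r, Rmult_1_l.
    destruct (period_pos A beta0 (sigma + g) S I (INR n * T) (INR n * T + T))
      as [_ [HSl HIl]]; eauto.
    destruct (sol_S_left n) as [L [HL ->]]. split.
    + apply Rmult_lt_0_compat; [lra | now apply HSl].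
    + now apply HIl, sol_I_left.
Qed.

Section Comparison.

Variable r : R.
Hypotheses (hAr : A <= r) (hrate : 0 < r * T + ln (1 - p)).

Let c := impulse_const r p T.
Let E := exp (r * T) * (1 - p).
Let gap0 := / S 0 - inv_logistic r c 0.

Let hr : 0 < r.
Proof. lra. Qed.

Let hE : 1 < E.
Proof.
  assert (HE : E = exp (r * T + ln (1 - p))) by (unfold E; rewrite exp_plus, exp_ln by lra; ring).
  pose proof (exp_increasing 0 _ hrate) as Hexp. rewrite exp_0 in Hexp. lra.
Qed.

Let hc : 0 <= c /\ inv_logistic r c T = (1 - p) * inv_logistic r c 0.
Proof. exact (impulse_const_spec r p T hr hp hE). Qed.

Lemma sol_gap_step n : / S (INR n * T) - inv_logistic r c 0 <=
  E * (/ S (INR n * T + T) - inv_logistic r c 0).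
Proof.
  destruct (sol_pos_at n) as [HS HI].
  destruct (period_pos A beta0 (sigma + g) S I (INR n * T) (INR n * T + T))
    as [_ [HSl _]]; eauto.
  destruct (inv_S_gap_growth A beta0 (sigma + g) S I (INR n * T) (INR n * T + T)) with r c
    as [_ Hleft]; eauto.
  destruct (sol_S_left n) as [L [HL ->]].
  specialize (Hleft L HL). specialize (HSl L HL).
  replace (INR n * T + T - INR n * T) with T in Hleft by ring.
  rewrite (proj2 hc) in Hleft.
  replace (E * (/ ((1 - p) * L) - inv_logistic r c 0))
    with ((/ L - (1 - p) * inv_logistic r c 0) * exp (r * T)) by (unfold E; field; lra).
  exact Hleft.
Qed.

Lemma sol_gap_lower n : gap0 * (/ E) ^ n <= / S (INR n * T) - inv_logistic r c 0.
Proof.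
  induction n as [| n IH].
  - unfold gap0. simpl. rewrite Rmult_0_l. lra.
  - rewrite S_INR, Rmult_plus_distr_r, Rmult_1_l, <- tech_pow_Rmult.
    pose proof (sol_gap_step n) as Hstep.
    assert (HiE : 0 < / E) by (apply Rinv_0_lt_compat; lra).
    apply (Rmult_le_compat_l (/ E)) in Hstep; [| lra].
    rewrite <- Rmult_assoc, Rinv_l, Rmult_1_l in Hstep by lra.
    apply (Rmult_le_compat_l (/ E)) in IH; [| lra]. lra.
Qed.

Lemma sol_inv_S_lower n t : INR n * T <= t < INR n * T + T ->
  - Rabs gap0 * (/ E) ^ n <= / S t - inv_logistic r c (t - INR n * T).
Proof.
  intros Ht. destruct (sol_pos_at n) as [HS HI].
  destruct (inv_S_gap_growth A beta0 (sigma + g) S I (INR n * T) (INR n * T + T)) with r c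
    as [Hin _]; eauto.
  specialize (Hin t Ht).
  pose proof (sol_gap_lower n) as Hlow.
  assert (Hbound : - Rabs gap0 * (/ E) ^ n <= gap0 * (/ E) ^ n).
  { pose proof (Rle_abs (- gap0)). rewrite Rabs_Ropp in *.
    assert (0 <= (/ E) ^ n) by (apply pow_le, Rlt_le, Rinv_0_lt_compat; lra). nra. }
  assert (Hexp : 1 <= exp (r * (t - INR n * T))).
  { rewrite <- exp_0. apply exp_le_compat. nra. }
  set (X := / S t - inv_logistic r c (t - INR n * T)) in *.
  destruct (Rle_or_lt 0 X) as [HX | HX].
  - assert (0 <= (/ E) ^ n) by (apply pow_le, Rlt_le, Rinv_0_lt_compat; lra).
    pose proof (Rabs_pos gap0). nra.
  - nra.
Qed.

Lemma sol_S_eventually_below M : 1 < M -> exists N0, forall n, (N0 <= n)%nat ->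
  forall t, INR n * T < t < INR n * T + T -> S t <= M / inv_logistic r c (t - INR n * T).
Proof.
  intros HM.
  assert (HiM : / M < 1) by (rewrite <- Rinv_1; apply Rinv_lt_contravar; lra).
  set (delta := (1 - / M) * / r).
  assert (Hdelta : 0 < delta) by (apply Rmult_lt_0_compat; [lra | apply Rinv_0_lt_compat, hr]).
  assert (HiE : 0 < / E < 1).
  { split; [apply Rinv_0_lt_compat; lra |]. rewrite <- Rinv_1. apply Rinv_lt_contravar; lra. }
  pose proof (Rabs_pos gap0) as Hg0.
  destruct (pow_lt_1_zero (/ E) ltac:(rewrite Rabs_right; lra) (delta / (Rabs gap0 + 1)))
    as [N0 HN0]; [apply Rdiv_lt_0_compat; lra |].
  exists N0. intros n Hn t Ht.
  specialize (HN0 n Hn). pose proof (pow_le (/ E) n ltac:(lra)) as HEn.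
  rewrite Rabs_right in HN0 by lra.
  assert (Hsmall : Rabs gap0 * (/ E) ^ n <= delta).
  { replace delta with ((Rabs gap0 + 1) * (delta / (Rabs gap0 + 1))) by (field; lra). nra. }
  destruct (sol_pos_at n) as [HSn HIn].
  destruct (period_pos A beta0 (sigma + g) S I (INR n * T) (INR n * T + T))
    as [Hpos _]; eauto.
  pose proof (proj1 (Hpos t ltac:(lra))) as HSt.
  pose proof (sol_inv_S_lower n t ltac:(lra)) as Hlow.
  pose proof (inv_logistic_ge r c (t - INR n * T) hr (proj1 hc)) as Hw.
  set (w := inv_logistic r c (t - INR n * T)) in *.
  assert (Hw0 : 0 < w) by (pose proof (Rinv_0_lt_compat r hr); lra).
  assert (Hinv : w / M <= / S t).
  { assert (delta <= (1 - / M) * w) by (apply Rmult_le_compat_l; lra).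
    unfold Rdiv. lra. }
  rewrite <- (Rinv_inv (S t)).
  replace (M / w) with (/ (w / M)) by (field; lra).
  apply Rinv_le_contravar; [apply Rdiv_lt_0_compat; lra | exact Hinv].
Qed.

Lemma sol_I_eventually_contracts M : 1 < M -> exists N0, forall n, (N0 <= n)%nat ->
  I (INR n * T + T) ^ 2 <=
  exp (2 * (beta0 * M * (r * T + ln (1 - p)) - (sigma + g) * T)) * I (INR n * T) ^ 2.
Proof.
  intros HM. destruct (sol_S_eventually_below M HM) as [N0 HN0].
  exists N0. intros n Hn.
  pose proof (I_sq_period_decay beta0 (sigma + g) S I (INR n * T) (INR n * T + T)
    hbeta0 (period_lt n) (sol_I_derive n) (sol_I_right n) r c M hr (proj1 hc) (HN0 n Hn)
    (sol_I_left n)) as Hdecay.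
  pose proof (inv_logistic_pos r c 0 hr (proj1 hc)) as Hw0.
  replace (INR n * T + T - INR n * T) with T in Hdecay by ring.
  rewrite (proj2 hc), ln_mult in Hdecay by lra.
  replace (r * T + (ln (1 - p) + ln (inv_logistic r c 0)) - ln (inv_logistic r c 0))
    with (r * T + ln (1 - p)) in Hdecay by ring.
  rewrite (Rmult_comm (exp _)). exact Hdecay.
Qed.

End Comparison.

Lemma sol_I_tends_to_0 : beta0 * (A * T + ln (1 - p)) < (sigma + g) * T -> is_lim I p_infty 0.
Proof.
  intros Hgap.
  destruct (exists_comparison_rate A beta0 (sigma + g) p T hA hbeta0 hsg hp hT Hgap)
    as [r [M [HAr [Hrate [HM HrM]]]]].
  destruct (sol_I_eventually_contracts r HAr Hrate M HM) as [N0 HN0].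
  apply (is_lim_0_of_period_contraction I T (exp (2 * beta0 * A * T))
    (exp (2 * (beta0 * M * (r * T + ln (1 - p)) - (sigma + g) * T))) N0 hT);
    [| | exact HN0 |].
  - apply Rlt_le, exp_pos.
  - split; [apply Rlt_le, exp_pos |].
    apply (Rlt_le_trans _ (exp 0)); [apply exp_increasing; lra | right; apply exp_0].
  - intros n t Ht.
    pose proof (I_sq_le_growth A beta0 (sigma + g) S I (INR n * T) (INR n * T + T)
      hA hbeta0 hk (period_lt n) (sol_I_derive n) (sol_I_right n) (sol_S_le n) t Ht) as Hgrowth.
    replace (INR n * T + T - INR n * T) with T in Hgrowth by ring. lra.
Qed.

End Solution.

Theorem lemma10 (A beta0 sigma g p T : R) (S I : R -> R)
  (hA : 0 < A <= 1) (hbeta0 : 0 < beta0)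
  (hsigma : 0 <= sigma) (hg : 0 <= g) (hsg : 0 < sigma + g)
  (hp : 0 <= p < 1) (hT : 0 < T)
  (hsol : impulsive_solution A beta0 sigma g p T S I)
  (hS0 : 0 < S 0) (hI0 : 0 < I 0)
  (hM1 : S 0 <= A)
  (hM2 : S 0 + I 0 <= A * (sigma + g + A) / (sigma + g))
  (hSA : forall t, 0 <= t -> S t <= A)
  (hR : Rp A beta0 sigma g p T < 1) :
  is_lim I p_infty 0.
Proof.
  apply (sol_I_tends_to_0 A beta0 sigma g p T S I (proj1 hA) hbeta0 hsg hp hT hsol hS0 hI0 hSA).
  now apply Rp_lt_1_iff.
Qed.
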